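(* At a point of a framework, consider a tensor derivation $M(\cdot)$ acting on spinors by a matrix $M^\alpha_\beta$ and on vectors by a matrix $M^i_j$, so that $$M(\cdot)\bigl(T^\alpha_{i\beta}\bigr)=M^\alpha_\lambda T^\lambda_{i\beta}-T^\alpha_{i\lambda}M^\lambda_\beta-M^k_iT^\alpha_{k\beta}.$$ Then $M(\cdot)(T^\alpha_{i\beta})=0$ for all $i,\alpha,\beta$ if and only if there exist a scalar $a$ and a vector $b^k$ with $$M^\alpha_\beta=a\,1^\alpha_\beta+b^kT^\alpha_{k\beta},\qquad M^i_j=b^kT^i_{kj}.$$
   Context: Framework (pointwise data). $V$ is a real 4-dimensional vector space (''spinors'') with Greek indices; lowercase Latin indices index a 10-dimensional real vector space (the tangent space); summation convention. $T^k_{ij}$ are structure constants making the tangent space a Lie algebra isomorphic to $\mathfrak{so}(2,3)\cong\mathfrak{sp}(4,\mathbb R)$, and $T^\alpha_{i\beta}$ are matrices with $T^\alpha_{i\lambda}T^\lambda_{j\beta}-T^\alpha_{j\lambda}T^\lambda_{i\beta}=T^k_{ij}T^\alpha_{k\beta}$ giving the 4-dimensional irreducible real representation of this Lie algebra on $V$. $1^\alpha_\beta$ is the identity on $V$. *)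

From HB Require Import structures.
From mathcomp Require Import all_boot all_order all_algebra.
From mathcomp Require Import reals.
Set Implicit Arguments. Unset Strict Implicit. Unset Printing Implicit Defensive.
Import Order.TTheory GRing.Theory Num.Theory.
Local Open Scope ring_scope.

(* Conventions:
   Tv k i j  = T^k_{ij}   (structure constants of the 10-dim tangent Lie algebra)
   Ts a i b  = T^alpha_{i beta}  (spinor representation matrices)
   Ms a b    = M^alpha_beta,   Mv i j = M^i_j. *)

Section Defs.
Variable R : realType.

Definition Jsymp : 'M[R]_4 :=
  \matrix_(i < 4, j < 4)
    (if (i + 2 == j)%N then 1 else if (j + 2 == i)%N then -1 else 0).

Definition is_sp4 (A : 'M[R]_4) : Prop := A^T *m Jsymp + Jsymp *m A = 0.

(* The Lie algebra with structure constants Tv is isomorphic to sp(4,R):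
   a linear bijection R^10 -> sp(4,R) (given on the standard basis by phi)
   intertwining the brackets. *)
Definition iso_to_sp4 (Tv : 'I_10 -> 'I_10 -> 'I_10 -> R) : Prop :=
  exists phi : 'I_10 -> 'M[R]_4,
    [/\ forall i, is_sp4 (phi i),
        forall c : 'I_10 -> R, \sum_i c i *: phi i = 0 -> forall i, c i = 0,
        forall A, is_sp4 A -> exists c : 'I_10 -> R, A = \sum_i c i *: phi i
      & forall i j, phi i *m phi j - phi j *m phi i = \sum_k Tv k i j *: phi k].

Definition is_rep (Tv : 'I_10 -> 'I_10 -> 'I_10 -> R)
    (Ts : 'I_4 -> 'I_10 -> 'I_4 -> R) : Prop :=
  forall i j a b,
    \sum_l (Ts a i l * Ts l j b - Ts a j l * Ts l i b)
    = \sum_k Tv k i j * Ts a k b.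

Definition Tmat (Ts : 'I_4 -> 'I_10 -> 'I_4 -> R) (i : 'I_10) : 'M[R]_4 :=
  \matrix_(a < 4, b < 4) Ts a i b.

(* irreducibility over R: every subspace of R^4 (given as the row space of U,
   rows being transposed column vectors) invariant under all T_i is 0 or R^4. *)
Definition irreducible_rep (Ts : 'I_4 -> 'I_10 -> 'I_4 -> R) : Prop :=
  forall U : 'M[R]_4,
    (forall i, (U *m (Tmat Ts i)^T <= U)%MS) -> U = 0 \/ row_full U.

Definition Mderiv_T (Ts : 'I_4 -> 'I_10 -> 'I_4 -> R)
    (Ms : 'I_4 -> 'I_4 -> R) (Mv : 'I_10 -> 'I_10 -> R)
    (a : 'I_4) (i : 'I_10) (b : 'I_4) : R :=
  \sum_l Ms a l * Ts l i b - \sum_l Ts a i l * Ms l b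
  - \sum_k Mv k i * Ts a k b.

End Defs.

From HB Require Import structures.
From mathcomp Require Import all_boot all_order all_algebra.
From mathcomp Require Import reals.
From mathcomp Require Import ring lra zify.
Import Order.TTheory GRing.Theory Num.Theory.
Local Open Scope ring_scope.
Set Implicit Arguments. Unset Strict Implicit. Unset Printing Implicit Defensive.

(* Transported along the isomorphism [phi], the matrices [T_i] form a 4-dimensional
   irreducible representation [rho] of sp(4,R).  Highest weight theory identifies it with
   the defining one: a vector killed by the positive root vectors exists (they act
   nilpotently), sl(2)-strings force its weight to be (1,0) (a weight (0,0) spans an
   invariant line, any other weight produces five vectors of distinct weights in
   dimension 4), and its images under the lowering operators give an invertible [P]
   with [T_i P = P phi_i].  After conjugation by [P] the hypothesis says that [M]
   normalises sp(4,R); then [M^T J + J M] is an antisymmetric invariant form, hence a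
   multiple of [J], so [M] is a scalar plus an element [b^k T_k] of the algebra, and
   linear independence of the [T_k] gives [M^i_j = b^k T^i_{kj}]. *)

Definition br (R : pzRingType) n (A B : 'M[R]_n) := A *m B - B *m A.

Lemma br_sum_scale (R : comPzRingType) n (I J : finType) (F : I -> 'M[R]_n) (G : J -> 'M[R]_n)
    (a : I -> R) (b : J -> R) :
  br (\sum_i a i *: F i) (\sum_j b j *: G j) = \sum_i \sum_j (a i * b j) *: br (F i) (G j).
Proof.
rewrite /br.
have -> : (\sum_i a i *: F i) *m (\sum_j b j *: G j) =
    \sum_i \sum_j (a i * b j) *: (F i *m G j).
  rewrite mulmx_suml; apply: eq_bigr => i _; rewrite mulmx_sumr; apply: eq_bigr => j _.
  by rewrite -scalemxAl -scalemxAr scalerA.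
have -> : (\sum_j b j *: G j) *m (\sum_i a i *: F i) =
    \sum_i \sum_j (a i * b j) *: (G j *m F i).
  rewrite mulmx_sumr; apply: eq_bigr => i _; rewrite mulmx_suml; apply: eq_bigr => j _.
  by rewrite -scalemxAl -scalemxAr scalerA mulrC.
rewrite -sumrB; apply: eq_bigr => i _; rewrite -sumrB; apply: eq_bigr => j _.
by rewrite scalerBr.
Qed.

Lemma br_comb_left (R : comPzRingType) n (I : finType) (F : I -> 'M[R]_n)
    (C : I -> I -> I -> R) (b : I -> R) i :
  (forall i j, br (F i) (F j) = \sum_k C k i j *: F k) ->
  br (\sum_j b j *: F j) (F i) = \sum_k (\sum_j b j * C k j i) *: F k.
Proof.
move=> F_br; have -> : br (\sum_j b j *: F j) (F i) = \sum_j b j *: br (F j) (F i).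
  rewrite /br mulmx_suml mulmx_sumr -sumrB; apply: eq_bigr => j _.
  by rewrite -scalemxAl -scalemxAr scalerBr.
under eq_bigr => j _ do rewrite F_br scaler_sumr.
rewrite exchange_big /=; apply: eq_bigr => k _.
by rewrite scaler_suml; apply: eq_bigr => j _; rewrite scalerA.
Qed.

Lemma br_scalar_mxDl (R : comPzRingType) n (c : R) (X Y : 'M[R]_n) : br (c%:M + X) Y = br X Y.
Proof. by rewrite /br mulmxDl mulmxDr mul_scalar_mx mul_mx_scalar opprD addrACA subrr add0r. Qed.

Definition colmx (R : pzRingType) m n (u : 'I_n -> 'cV[R]_m) : 'M[R]_(m, n) :=
  \matrix_(i, j) u j i 0.

Lemma mulmx_colmx (R : comPzRingType) m n (M : 'M[R]_m) (G : 'M[R]_n) (u : 'I_n -> 'cV[R]_m) :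
  (forall j, M *m u j = \sum_k G k j *: u k) -> M *m colmx u = colmx u *m G.
Proof.
move=> Mu; apply/matrixP => i j; rewrite !mxE.
have -> : \sum_k M i k * colmx u k j = (M *m u j) i 0.
  by rewrite mxE; apply: eq_bigr => k _; rewrite mxE.
by rewrite Mu summxE; apply: eq_bigr => k _; rewrite !mxE mulrC.
Qed.

Lemma card_eigenvalues_leq (F : fieldType) n (g : 'M[F]_n) (I : finType) (a_ : I -> F) :
  injective a_ -> (forall i, eigenvalue g (a_ i)) -> (#|I| <= n)%N.
Proof.
move=> inj_a eig_a.
have /mxdirectP /= rk_sum := mxdirect_sum_eigenspace g (P := predT) (in2W inj_a).
rewrite -sum1_card; apply: leq_trans (rank_leq_col (\sum_i eigenspace g (a_ i))%MS).
by rewrite rk_sum leq_sum // => i _; rewrite lt0n mxrank_eq0; apply: eig_a.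
Qed.

Lemma ad_eigenvector_nilpotent (R : numFieldType) n (h f : 'M[R]_n.+1) (c : R) :
  c != 0 -> br h f = c *: f -> exists k, f ^+ k = 0.
Proof.
move=> c_neq0 hf.
have ad_pow k : h *m f ^+ k - f ^+ k *m h = (k%:R * c) *: f ^+ k.
  elim: k => [|k IHk]; first by rewrite expr0 mul1mx mulmx1 subrr mul0r scale0r.
  rewrite exprS -mulmxE.
  have -> : h *m (f *m f ^+ k) - f *m f ^+ k *m h =
      (h *m f - f *m h) *m f ^+ k + f *m (h *m f ^+ k - f ^+ k *m h).
    by rewrite mulmxBl mulmxBr !mulmxA addrA subrK.
  rewrite [_ - _]hf IHk -scalemxAl -scalemxAr -scalerDl; congr (_ *: _).
  by rewrite mulrSr; ring.
(* [ad] is [br h] acting on [mxvec]; the [f ^+ k] are eigenvectors for the distinct [k c]. *)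
pose ad := lin_mulmx h - lin_mulmxr h.
have [k /eqP fk0 | fk_neq0] := pickP (fun k : 'I_(n.+1 * n.+1).+1 => f ^+ k == 0).
  by exists k.
have inj_a : injective (fun k : 'I_(n.+1 * n.+1).+1 => k%:R * c).
  by move=> i j /(mulIf c_neq0) /eqP; rewrite eqr_nat => /eqP /val_inj.
suff eig_ad (k : 'I_(n.+1 * n.+1).+1) : eigenvalue ad (k%:R * c).
  by have := card_eigenvalues_leq inj_a eig_ad; rewrite card_ord ltnn.
apply/eigenvalueP; exists (mxvec (f ^+ k)).
  by rewrite mulmxBr !mul_vec_lin /= -linearB -linearZ /= ad_pow.
by rewrite mxvec_eq0 (fk_neq0 k).
Qed.

Lemma last_nonzero_index (T : eqType) (x0 : T) (g : nat -> T) N :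
  g 0 != x0 -> g N = x0 -> exists j, [/\ (j < N)%N, g j != x0 & g j.+1 = x0].
Proof.
elim: N => [|N IHN] g0 gN; first by rewrite gN eqxx in g0.
have [/IHN [] // j [jN gj gj1]|gN_neq0] := eqVneq (g N) x0; last by exists N.
by exists j; split=> //; apply: ltnW.
Qed.

Section Nilpotent.
Variables (F : fieldType) (n : nat).
Implicit Types (g : 'M[F]_n.+1) (v : 'cV[F]_n.+1).

Lemma mulmx_exprS g k v : g ^+ k.+1 *m v = g *m (g ^+ k *m v).
Proof. by rewrite exprS -mulmxE mulmxA. Qed.

Lemma mulmx_exprSr g k v : g ^+ k.+1 *m v = g ^+ k *m (g *m v).
Proof. by rewrite exprSr -mulmxE mulmxA. Qed.

Lemma nilpotent_kernel_vector g k (P : 'cV[F]_n.+1 -> Prop) :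
  g ^+ k = 0 -> (forall v, P v -> P (g *m v)) ->
  forall w, P w -> w != 0 -> exists v, [/\ P v, v != 0 & g *m v = 0].
Proof.
move=> gk0 Pg w Pw w_neq0.
have := @last_nonzero_index _ 0 (fun j => g ^+ j *m w) k.
rewrite expr0 mul1mx gk0 mul0mx => /(_ w_neq0 erefl) [j [_ gjw_neq0 gj1w]].
exists (g ^+ j *m w); split => //; last by rewrite -mulmx_exprS.
by elim: j {gjw_neq0 gj1w} => [|j IHj]; rewrite ?expr0 ?mul1mx // mulmx_exprS; apply: Pg.
Qed.

End Nilpotent.

Section SL2.
Variables (R : numFieldType) (n : nat) (h e f : 'M[R]_n.+1).
Hypotheses (hf : br h f = - (2%:R *: f)) (ef : br e f = h).
Implicit Types (u v w : 'cV[R]_n.+1).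

Lemma sl2_f_nilpotent : exists N, f ^+ N = 0.
Proof.
apply: (@ad_eigenvector_nilpotent _ _ h f (- 2%:R)); first by rewrite oppr_eq0 pnatr_eq0.
by rewrite scaleNr.
Qed.

Let hfv v : h *m (f *m v) = f *m (h *m v) - 2%:R *: (f *m v).
Proof. by rewrite -scaleNr scalemxAl scaleNr -hf !mulmxA mulmxBl addrC subrK. Qed.

Let efv v : e *m (f *m v) = f *m (e *m v) + h *m v.
Proof. by rewrite -[in RHS]ef !mulmxA mulmxBl addrC subrK. Qed.

Lemma sl2_e_fpow k w : e *m (f ^+ k.+1 *m w) =
  f ^+ k.+1 *m (e *m w) + k.+1%:R *: (f ^+ k *m (h *m w - k%:R *: w)).
Proof.
elim: k w => [|k IHk] w; first by rewrite expr1 expr0 !mul1mx efv scale1r scale0r subr0.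
rewrite [f ^+ k.+2 *m w]mulmx_exprSr IHk efv hfv !mulmxDr !mulmxN -!scalemxAr.
rewrite -!mulmx_exprSr !mulmx_exprS.
move: (f *m (f *m _)) (f *m (f ^+ k *m (h *m w))) (f *m (f ^+ k *m w)) => a b c.
by apply/matrixP => i j; rewrite !mxE -!natr1; ring.
Qed.

Lemma sl2_eigenvector_nat (P : 'cV[R]_n.+1 -> Prop) :
  (forall v (c : R), P v -> P (h *m v - c *: v)) -> (forall v, P v -> e *m v = 0) ->
  forall w, P w -> w != 0 -> exists v (m : nat), [/\ P v, v != 0 & h *m v = m%:R *: v].
Proof.
move=> Ph Pe w Pw w_neq0; have [N fN0] := sl2_f_nilpotent.
pose g := fix g j := if j is j'.+1 then h *m g j' - (N.-1 - j')%:R *: g j' else w.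
(* By [sl2_e_fpow], each factor [h - (N.-1 - j)] lowers by one the power of [f] killing
   [g j], so [g N = 0]; the last nonzero [g j] is an eigenvector of [h]. *)
have Pg j : (j <= N)%N -> f ^+ (N - j) *m g j = 0 /\ P (g j).
  elim: j => [|j IHj] jN; first by rewrite subn0 fN0 mul0mx.
  have [fg0 Pgj] := IHj (ltnW jN); split; last exact: Ph.
  have EN : (N - j = (N.-1 - j).+1)%N by lia.
  have := sl2_e_fpow (N.-1 - j) (g j); rewrite -{1}EN fg0 mulmx0 (Pe _ Pgj) mulmx0 add0r.
  move=> /esym/eqP; rewrite scaler_eq0 pnatr_eq0 /= => /eqP fg1.
  by rewrite subnS EN.
have gN : g N = 0 by have [] := Pg N (leqnn N); rewrite subnn expr0 mul1mx.
have [j [jN gj_neq0 gj1]] := @last_nonzero_index _ 0 g N w_neq0 gN.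
exists (g j), (N.-1 - j)%N; split => //; first exact: (Pg j (ltnW jN)).2.
by move/eqP: gj1; rewrite /= subr_eq0 => /eqP.
Qed.

Section HighestWeight.
Variables (u : 'cV[R]_n.+1) (mu : R).
Hypotheses (eu : e *m u = 0) (hu : h *m u = mu *: u).

Lemma sl2_e_fpow_hw j : e *m (f ^+ j.+1 *m u) = (j.+1%:R * (mu - j%:R)) *: (f ^+ j *m u).
Proof. by rewrite sl2_e_fpow eu mulmx0 add0r hu -scalerBl -scalemxAr scalerA. Qed.

Lemma sl2_highest_weight : u != 0 -> exists m : nat,
  [/\ mu = m%:R, f ^+ m.+1 *m u = 0 & forall j, (j <= m)%N -> f ^+ j *m u != 0].
Proof.
move=> u_neq0; have [N fN0] := sl2_f_nilpotent.
have := @last_nonzero_index _ 0 (fun j => f ^+ j *m u) N.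
rewrite expr0 mul1mx fN0 mul0mx => /(_ u_neq0 erefl) [m [_ fmu_neq0 fm1u]].
exists m; split => //.
  move: (sl2_e_fpow_hw m); rewrite fm1u mulmx0 => /esym/eqP.
  by rewrite scaler_eq0 (negbTE fmu_neq0) orbF mulf_eq0 pnatr_eq0 /= subr_eq0 => /eqP.
move=> j jm; apply: contra fmu_neq0 => /eqP fju0.
by rewrite -(subnK jm) exprD -mulmxE -mulmxA fju0 mulmx0.
Qed.

End HighestWeight.

Lemma sl2_fpow_eq0 u (m : nat) : e *m u = 0 -> h *m u = m%:R *: u -> f ^+ m.+1 *m u = 0.
Proof.
move=> eu hu; have [->|u_neq0] := eqVneq u 0; first by rewrite mulmx0.
by have [k [/eqP + ? _]] := sl2_highest_weight eu hu u_neq0; rewrite eqr_nat => /eqP ->.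
Qed.

Lemma sl2_fpow_neq0 u (m j : nat) : e *m u = 0 -> h *m u = m%:R *: u -> u != 0 ->
  (j <= m)%N -> f ^+ j *m u != 0.
Proof.
move=> eu hu u_neq0; have [k [/eqP + _ fk_neq0]] := sl2_highest_weight eu hu u_neq0.
by rewrite eqr_nat => /eqP ->; apply: fk_neq0.
Qed.

End SL2.

Section Sp4Basis.
Context {R : realType}.

(* Integer matrices: identities between the concrete matrices below reduce to evaluating
   integer-valued functions. *)
Definition zmx (f : nat -> nat -> int) : 'M[R]_4 := \matrix_(i, j) (f i j)%:~R.

Definition zmul (f g : nat -> nat -> int) i j : int :=
  f i 0%N * g 0%N j + f i 1%N * g 1%N j + f i 2%N * g 2%N j + f i 3%N * g 3%N j.

Lemma zmx_mul f g : zmx f *m zmx g = zmx (zmul f g).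
Proof.
apply/matrixP => i j; rewrite !mxE !big_ord_recl big_ord0 !mxE /zmul /=.
by rewrite addr0 !rmorphD !rmorphM /= !addrA.
Qed.

Lemma zmx_add f g : zmx f + zmx g = zmx (fun i j => f i j + g i j).
Proof. by apply/matrixP => i j; rewrite !mxE rmorphD. Qed.

Lemma zmx_opp f : - zmx f = zmx (fun i j => - f i j).
Proof. by apply/matrixP => i j; rewrite !mxE rmorphN. Qed.

Lemma zmx_scale (k : nat) f : k%:R *: zmx f = zmx (fun i j => k%:Z * f i j).
Proof. by apply/matrixP => i j; rewrite !mxE rmorphM. Qed.

Lemma zmx_tr f : (zmx f)^T = zmx (fun i j => f j i).
Proof. by apply/matrixP => i j; rewrite !mxE. Qed.

Lemma zmx0 : 0 = zmx (fun _ _ => 0).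
Proof. by apply/matrixP => i j; rewrite !mxE. Qed.

Lemma zmx_ext f g : (forall i j, (i < 4)%N -> (j < 4)%N -> f i j = g i j) -> zmx f = zmx g.
Proof. by move=> fg; apply/matrixP => i j; rewrite !mxE fg. Qed.

Definition unit_z (a b : nat) i j : int := ((i == a) && (j == b))%:Z.

(* A Chevalley basis: [H1], [H2] span a Cartan subalgebra, [E1]/[F1], [E2]/[F2],
   [Ed]/[Fd], [Es]/[Fs] are root vectors for the roots ±2ε1, ±2ε2, ±(ε1 - ε2),
   ±(ε1 + ε2), and [Hd], [Hs] are the coroots of ε1 - ε2 and ε1 + ε2. *)
Definition H1 := zmx (fun i j => unit_z 0 0 i j - unit_z 2 2 i j).
Definition H2 := zmx (fun i j => unit_z 1 1 i j - unit_z 3 3 i j).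
Definition E1 := zmx (unit_z 0 2).
Definition F1 := zmx (unit_z 2 0).
Definition E2 := zmx (unit_z 1 3).
Definition F2 := zmx (unit_z 3 1).
Definition Ed := zmx (fun i j => unit_z 0 1 i j - unit_z 3 2 i j).
Definition Fd := zmx (fun i j => unit_z 1 0 i j - unit_z 2 3 i j).
Definition Es := zmx (fun i j => unit_z 0 3 i j + unit_z 1 2 i j).
Definition Fs := zmx (fun i j => unit_z 3 0 i j + unit_z 2 1 i j).
Definition Hd := H1 - H2.
Definition Hs := H1 + H2.

Lemma Jsymp_zmx : Jsymp R = zmx (fun i j => unit_z 0 2 i j + unit_z 1 3 i j
                                           - unit_z 2 0 i j - unit_z 3 1 i j).
Proof. by apply/matrixP => -[[|[|[|[|?]]]] ?] [[|[|[|[|?]]]] ?]; rewrite !mxE. Qed.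

Ltac zmx_compute :=
  rewrite /br /is_sp4 ?Jsymp_zmx /Hd /Hs /H1 /H2 /E1 /F1 /E2 /F2 /Ed /Fd /Es /Fs
    ?scaleN1r ?scale1r ?scaleNr ?scale0r ?zmx0
    ?(zmx_tr, zmx_mul, zmx_scale, zmx_opp, zmx_add);
  apply: zmx_ext; do 4?[case=> //]; do 4?[case=> //].

Definition root_vector (Z : 'M[R]_4) (p q : R) := br H1 Z = p *: Z /\ br H2 Z = q *: Z.

Lemma root_E1 : root_vector E1 2%:R 0. Proof. by split; zmx_compute. Qed.
Lemma root_F1 : root_vector F1 (- 2%:R) 0. Proof. by split; zmx_compute. Qed.
Lemma root_E2 : root_vector E2 0 2%:R. Proof. by split; zmx_compute. Qed.
Lemma root_F2 : root_vector F2 0 (- 2%:R). Proof. by split; zmx_compute. Qed.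
Lemma root_Ed : root_vector Ed 1 (- 1). Proof. by split; zmx_compute. Qed.
Lemma root_Fd : root_vector Fd (- 1) 1. Proof. by split; zmx_compute. Qed.
Lemma root_Es : root_vector Es 1 1. Proof. by split; zmx_compute. Qed.
Lemma root_Fs : root_vector Fs (- 1) (- 1). Proof. by split; zmx_compute. Qed.

Lemma br_H1_H2 : br H1 H2 = 0. Proof. zmx_compute. Qed.
Lemma br_Hd_Fd : br Hd Fd = (- 2%:R) *: Fd. Proof. zmx_compute. Qed.
Lemma br_Hs_Fs : br Hs Fs = (- 2%:R) *: Fs. Proof. zmx_compute. Qed.
Lemma br_E1_F1 : br E1 F1 = H1. Proof. zmx_compute. Qed.
Lemma br_E2_F2 : br E2 F2 = H2. Proof. zmx_compute. Qed.
Lemma br_Ed_Fd : br Ed Fd = Hd. Proof. zmx_compute. Qed.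
Lemma br_Es_Fs : br Es Fs = Hs. Proof. zmx_compute. Qed.
Lemma br_E1_E2 : br E1 E2 = 0. Proof. zmx_compute. Qed.
Lemma br_E1_Es : br E1 Es = 0. Proof. zmx_compute. Qed.
Lemma br_E2_Es : br E2 Es = 0. Proof. zmx_compute. Qed.
Lemma br_E1_Ed : br E1 Ed = 0. Proof. zmx_compute. Qed.
Lemma br_E2_Ed : br E2 Ed = - Es. Proof. zmx_compute. Qed.
Lemma br_Es_Ed : br Es Ed = - (2%:R *: E1). Proof. zmx_compute. Qed.
Lemma br_E1_Fd : br E1 Fd = - Es. Proof. zmx_compute. Qed.
Lemma br_E2_F1 : br E2 F1 = 0. Proof. zmx_compute. Qed.
Lemma br_E2_Fd : br E2 Fd = 0. Proof. zmx_compute. Qed.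
Lemma br_E2_Fs : br E2 Fs = Fd. Proof. zmx_compute. Qed.
Lemma br_Ed_F1 : br Ed F1 = - Fs. Proof. zmx_compute. Qed.
Lemma br_Ed_Fs : br Ed Fs = - (2%:R *: F2). Proof. zmx_compute. Qed.
Lemma br_Fd_F1 : br Fd F1 = 0. Proof. zmx_compute. Qed.
Lemma br_Fd_F2 : br Fd F2 = - Fs. Proof. zmx_compute. Qed.
Lemma br_Fd_Fs : br Fd Fs = - (2%:R *: F1). Proof. zmx_compute. Qed.
Lemma br_F2_F1 : br F2 F1 = 0. Proof. zmx_compute. Qed.
Lemma br_F2_Fd : br F2 Fd = Fs. Proof. zmx_compute. Qed.
Lemma br_F2_Fs : br F2 Fs = 0. Proof. zmx_compute. Qed.

Lemma sp4_H1 : is_sp4 H1. Proof. zmx_compute. Qed.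
Lemma sp4_H2 : is_sp4 H2. Proof. zmx_compute. Qed.
Lemma sp4_E1 : is_sp4 E1. Proof. zmx_compute. Qed.
Lemma sp4_F1 : is_sp4 F1. Proof. zmx_compute. Qed.
Lemma sp4_E2 : is_sp4 E2. Proof. zmx_compute. Qed.
Lemma sp4_F2 : is_sp4 F2. Proof. zmx_compute. Qed.
Lemma sp4_Ed : is_sp4 Ed. Proof. zmx_compute. Qed.
Lemma sp4_Fd : is_sp4 Fd. Proof. zmx_compute. Qed.
Lemma sp4_Es : is_sp4 Es. Proof. zmx_compute. Qed.
Lemma sp4_Fs : is_sp4 Fs. Proof. zmx_compute. Qed.
Lemma sp4_Hd : is_sp4 Hd. Proof. zmx_compute. Qed.
Lemma sp4_Hs : is_sp4 Hs. Proof. zmx_compute. Qed.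

End Sp4Basis.

#[local] Hint Resolve sp4_H1 sp4_H2 sp4_E1 sp4_F1 sp4_E2 sp4_F2 sp4_Ed sp4_Fd sp4_Es sp4_Fs
  sp4_Hd sp4_Hs : core.

Section Sp4Structure.
Context {R : realType}.

Lemma is_sp4_0 : is_sp4 (0 : 'M[R]_4).
Proof. by rewrite /is_sp4 trmx0 mul0mx mulmx0 addr0. Qed.

Lemma is_sp4_combine a (A B : 'M[R]_4) : is_sp4 A -> is_sp4 B -> is_sp4 (A + a *: B).
Proof.
rewrite /is_sp4 => sA sB; rewrite linearD linearZ /= mulmxDl mulmxDr -scalemxAl -scalemxAr.
by rewrite addrACA -scalerDr sA sB scaler0 addr0.
Qed.

Lemma is_sp4_sum (I : finType) (c : I -> R) (F : I -> 'M[R]_4) :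
  (forall i, is_sp4 (F i)) -> is_sp4 (\sum_i c i *: F i).
Proof.
move=> sF; apply: big_ind; first exact: is_sp4_0.
  by move=> A B sA sB; have := is_sp4_combine 1 sA sB; rewrite scale1r.
by move=> i _; have := is_sp4_combine (c i) is_sp4_0 (sF i); rewrite add0r.
Qed.

Definition o0 : 'I_4 := @Ordinal 4 0 isT.
Definition o1 : 'I_4 := @Ordinal 4 1 isT.
Definition o2 : 'I_4 := @Ordinal 4 2 isT.
Definition o3 : 'I_4 := @Ordinal 4 3 isT.

Lemma sum_ord4 (V : nmodType) (F : 'I_4 -> V) : \sum_i F i = F o0 + F o1 + F o2 + F o3.
Proof.
rewrite !big_ord_recl big_ord0 addr0 !addrA.
by congr (_ + _ + _ + _); apply: congr1; apply: val_inj.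
Qed.

Lemma ord4P (P : 'I_4 -> Prop) : P o0 -> P o1 -> P o2 -> P o3 -> forall i, P i.
Proof. by move=> P0 P1 P2 P3 [[|[|[|[|?]]]] i4] //; rewrite (bool_irrelevance i4 isT). Qed.

Lemma sp4_entries (A : 'M[R]_4) : is_sp4 A ->
  A o2 o2 = - A o0 o0 /\ A o3 o3 = - A o1 o1 /\ A o2 o3 = - A o1 o0 /\
  A o3 o2 = - A o0 o1 /\ A o1 o2 = A o0 o3 /\ A o2 o1 = A o3 o0.
Proof.
rewrite /is_sp4 Jsymp_zmx => /matrixP sA.
move: (sA o0 o2) (sA o1 o3) (sA o1 o2) (sA o0 o3) (sA o0 o1) (sA o2 o3).
rewrite !mxE !sum_ord4 !mxE /unit_z /=.
by move=> *; do !split; lra.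
Qed.

Lemma sp4_decomposition (A : 'M[R]_4) : is_sp4 A ->
  A = A o0 o0 *: H1 + A o1 o1 *: H2 + A o0 o2 *: E1 + A o2 o0 *: F1 + A o1 o3 *: E2
    + A o3 o1 *: F2 + A o0 o1 *: Ed + A o1 o0 *: Fd + A o0 o3 *: Es + A o3 o0 *: Fs.
Proof.
move/sp4_entries => [? [? [? [? [? ?]]]]].
by apply/matrixP; apply: ord4P; apply: ord4P; rewrite !mxE /unit_z /=; lra.
Qed.

Lemma sp4_generated (P : 'M[R]_4 -> Prop) :
  (forall a A B, P A -> P B -> P (A + a *: B)) ->
  (forall A B, is_sp4 A -> is_sp4 B -> P A -> P B -> P (br A B)) ->
  P Ed -> P Fd -> P E2 -> P F2 -> forall A, is_sp4 A -> P A.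
Proof.
move=> Plin Pbr PEd PFd PE2 PF2.
have P0 : P 0 by have := Plin (-1) _ _ PEd PEd; rewrite scaleN1r subrr.
have Pscale a A : P A -> P (a *: A) by move/(Plin a _ _ P0); rewrite add0r.
have half_2 (Z : 'M[R]_4) : (- 2%:R^-1) *: - (2%:R *: Z) = Z.
  by rewrite scaleNr scalerN opprK scalerA mulVf ?pnatr_eq0 // scale1r.
have PHd : P Hd by rewrite -br_Ed_Fd; apply: Pbr.
have PH2 : P H2 by rewrite -br_E2_F2; apply: Pbr.
have PH1 : P H1 by have := Plin 1 _ _ PHd PH2; rewrite scale1r /Hd subrK.
have PEs : P Es.
  by have := Pscale (-1) _ (Pbr _ _ sp4_E2 sp4_Ed PE2 PEd); rewrite br_E2_Ed scaleN1r opprK.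
have PE1 : P E1.
  by have := Pscale (- 2%:R^-1) _ (Pbr _ _ sp4_Es sp4_Ed PEs PEd); rewrite br_Es_Ed half_2.
have PFs : P Fs by rewrite -br_F2_Fd; apply: Pbr.
have PF1 : P F1.
  by have := Pscale (- 2%:R^-1) _ (Pbr _ _ sp4_Fd sp4_Fs PFd PFs); rewrite br_Fd_Fs half_2.
move=> A /sp4_decomposition ->.
by rewrite -[_ *: H1]add0r; repeat apply: (Plin).
Qed.

Lemma Jsymp_tr : (Jsymp R)^T = - Jsymp R.
Proof. by rewrite Jsymp_zmx zmx_tr zmx_opp; apply: zmx_ext; do 4?[case=> //]; do 4?[case=> //]. Qed.

Lemma sp4_invariant_form (M A : 'M[R]_4) : is_sp4 A -> is_sp4 (br M A) ->
  A^T *m (M^T *m Jsymp R + Jsymp R *m M) + (M^T *m Jsymp R + Jsymp R *m M) *m A = 0.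
Proof.
rewrite /is_sp4 /br; set J := Jsymp R => sA sMA.
have AJ : A^T *m J = - (J *m A) by apply/eqP; rewrite -subr_eq0 opprK sA.
move: sMA; rewrite linearB /= !trmx_mul mulmxBl mulmxBr -!mulmxA AJ !mulmxA.
rewrite mulmxDr mulmxDl !mulmxA AJ !mulmxN !mulNmx !mulmxA.
move: (A^T *m M^T *m J) (M^T *m J *m A) (J *m M *m A) (J *m A *m M) => x y z w.
by move=> sMA; rewrite -[RHS]sMA; apply/matrixP => ? ?; rewrite !mxE; ring.
Qed.

Lemma sp4_invariant_antisym_form (N : 'M[R]_4) : N^T = - N ->
  H1^T *m N + N *m H1 = 0 -> Ed^T *m N + N *m Ed = 0 -> N = N o0 o2 *: Jsymp R.
Proof.
rewrite Jsymp_zmx /H1 /Ed => /matrixP aN /matrixP iH1 /matrixP iEd.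
move: (iH1 o0 o1) (iH1 o0 o3) (iH1 o1 o2) (iH1 o2 o3) (iEd o1 o2).
rewrite !mxE !sum_ord4 !mxE /unit_z /= => *.
apply/matrixP; apply: ord4P; apply: ord4P; rewrite !mxE /=;
  move: (aN o0 o0) (aN o0 o1) (aN o0 o2) (aN o0 o3) (aN o1 o1) (aN o1 o2) (aN o1 o3)
    (aN o2 o2) (aN o2 o3) (aN o3 o3); rewrite !mxE => *; lra.
Qed.

Lemma sp4_normalizer (M : 'M[R]_4) : (forall A, is_sp4 A -> is_sp4 (br M A)) ->
  exists c, is_sp4 (M - c%:M).
Proof.
move=> nM; set N := M^T *m Jsymp R + Jsymp R *m M.
have N_antisym : N^T = - N.
  by rewrite /N linearD /= !trmx_mul trmxK Jsymp_tr mulmxN mulNmx opprD addrC.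
have := sp4_invariant_antisym_form N_antisym (sp4_invariant_form sp4_H1 (nM _ sp4_H1))
  (sp4_invariant_form sp4_Ed (nM _ sp4_Ed)).
set n := N o0 o2 => NJ; exists (n / 2%:R).
rewrite /is_sp4 linearB /= tr_scalar_mx mulmxBl mulmxBr mul_scalar_mx mul_mx_scalar.
by rewrite addrACA -opprD -scalerDl -splitr -/N {1}NJ subrr.
Qed.

End Sp4Structure.

Section Transport.
Variables (R : realType) (Tv : 'I_10 -> 'I_10 -> 'I_10 -> R) (Ts : 'I_4 -> 'I_10 -> 'I_4 -> R)
  (phi : 'I_10 -> 'M[R]_4).
Hypotheses (phi_sp4 : forall i, is_sp4 (phi i))
  (phi_free : forall c : 'I_10 -> R, \sum_i c i *: phi i = 0 -> forall i, c i = 0)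
  (phi_span : forall A, is_sp4 A -> exists c : 'I_10 -> R, A = \sum_i c i *: phi i)
  (phi_br : forall i j, br (phi i) (phi j) = \sum_k Tv k i j *: phi k)
  (Ts_rep : is_rep Tv Ts) (Ts_irr : irreducible_rep Ts).

Local Notation T := (Tmat Ts).

Lemma Tmat_br i j : br (T i) (T j) = \sum_k Tv k i j *: T k.
Proof.
apply/matrixP => a b; rewrite /br summxE !mxE.
under [RHS]eq_bigr => k _ do rewrite !mxE.
by rewrite -Ts_rep sumrB; congr (_ - _); apply: eq_bigr => l _; rewrite !mxE.
Qed.

Lemma Tmat_intertwiner_unit (P : 'M[R]_4) (G : 'I_10 -> 'M[R]_4) :
  P != 0 -> (forall i, T i *m P = P *m G i) -> P \in unitmx.
Proof.
move=> P_neq0 TP; have [i|/eqP|] := Ts_irr (U := P^T).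
- by rewrite -trmx_mul TP trmx_mul submxMl.
- by rewrite trmx_eq0 (negbTE P_neq0).
- by rewrite row_full_unit unitmx_tr.
Qed.

Lemma Tmat_common_kernel_eq0 (v : 'cV[R]_4) : (forall i, T i *m v = 0) -> v = 0.
Proof.
move=> Tv0; apply/eqP/negPn/negP => v_neq0.
pose P := v *m const_mx 1 : 'M[R]_4.
have P_neq0 : P != 0.
  apply: contra v_neq0 => /eqP/matrixP P0; apply/eqP/matrixP => i j.
  by have := P0 i o0; rewrite (ord1 j) !mxE big_ord1 mxE mulr1.
have /(Tmat_intertwiner_unit P_neq0) : forall i, T i *m P = P *m 0.
  by move=> i; rewrite mulmxA Tv0 mul0mx mulmx0.
rewrite -row_full_unit /row_full => /eqP rkP.
have := leq_trans (mxrankM_maxl v (const_mx 1 : 'rV[R]_4)) (rank_leq_col v).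
by rewrite -/P rkP.
Qed.

(* [rho] is the representation transported to sp(4) along [phi], extended linearly to
   all matrices through coordinates in the basis [phi]. *)
Definition rho (A : 'M[R]_4) : 'M[R]_4 :=
  \sum_i (mxvec A *m pinvmx (\matrix_j mxvec (phi j))) 0 i *: T i.

Fact rho_is_linear : linear rho.
Proof.
move=> a A B; rewrite /rho linearP /= mulmxDl -scalemxAl scaler_sumr -big_split /=.
by apply: eq_bigr => i _; rewrite !mxE scalerDl scalerA.
Qed.

HB.instance Definition _ := GRing.isLinear.Build R 'M[R]_4 'M[R]_4 _ rho rho_is_linear.

Lemma rho_phi i : rho (phi i) = T i.
Proof.
pose Phi := \matrix_j mxvec (phi j).
have delta_sum (F : 'I_10 -> 'M[R]_4) : \sum_j (i == j)%:R *: F j = F i.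
  rewrite (bigD1 i) //= eqxx scale1r big1 ?addr0 // => j ji.
  by rewrite eq_sym (negbTE ji) scale0r.
set c := mxvec (phi i) *m pinvmx Phi.
have c_Phi : c *m Phi = mxvec (phi i).
  by apply: mulmxKpV; rewrite -(rowK (fun j => mxvec (phi j)) i) row_sub.
have coords j : c 0 j = (i == j)%:R.
  apply/eqP; rewrite -subr_eq0; apply/eqP; move: j; apply: phi_free.
  apply: (can_inj mxvecK); under eq_bigr do rewrite scalerBl.
  rewrite sumrB delta_sum linear0 linearB linear_sum /= -c_Phi mulmx_sum_row.
  by apply/eqP; rewrite subr_eq0; apply/eqP/eq_bigr => j _; rewrite rowK linearZ.
by rewrite /rho; under eq_bigr do rewrite coords; rewrite delta_sum.
Qed.

Lemma rho_br A B : is_sp4 A -> is_sp4 B -> rho (br A B) = br (rho A) (rho B).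
Proof.
have rho_comb (c : 'I_10 -> R) : rho (\sum_i c i *: phi i) = \sum_i c i *: T i.
  by rewrite linear_sum; apply: eq_bigr => i _; rewrite linearZ /= rho_phi.
move=> /phi_span [a ->] /phi_span [b ->].
rewrite !rho_comb !br_sum_scale linear_sum; apply: eq_bigr => i _.
rewrite linear_sum; apply: eq_bigr => j _.
by rewrite linearZ /= phi_br Tmat_br rho_comb.
Qed.

Lemma rho_comm A B (v : 'cV[R]_4) : is_sp4 A -> is_sp4 B ->
  rho A *m (rho B *m v) = rho B *m (rho A *m v) + rho (br A B) *m v.
Proof. by move=> sA sB; rewrite rho_br // /br mulmxBl !mulmxA addrC subrK. Qed.


Lemma rho_ad_nilpotent H Z (c : R) : is_sp4 H -> is_sp4 Z -> c != 0 -> br H Z = c *: Z ->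
  exists k, rho Z ^+ k = 0.
Proof.
move=> sH sZ c_neq0 HZ; apply: (ad_eigenvector_nilpotent (h := rho H) c_neq0).
by rewrite -rho_br // HZ linearZ.
Qed.

Lemma rho_sl2 H E F : is_sp4 H -> is_sp4 E -> is_sp4 F ->
  br H F = (- 2%:R) *: F -> br E F = H ->
  br (rho H) (rho F) = - (2%:R *: rho F) /\ br (rho E) (rho F) = rho H.
Proof. by move=> sH sE sF HF EF; rewrite -!rho_br // HF EF linearZ /= scaleNr. Qed.

Lemma rho_kill_comm Z W (v : 'cV[R]_4) : is_sp4 Z -> is_sp4 W ->
  rho Z *m v = 0 -> rho (br Z W) *m v = 0 -> rho Z *m (rho W *m v) = 0.
Proof. by move=> sZ sW Zv ZWv; rewrite rho_comm // Zv mulmx0 add0r. Qed.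

Lemma rho_kill_shift H Z (a c : R) (v : 'cV[R]_4) : is_sp4 H -> is_sp4 Z ->
  br H Z = a *: Z -> rho Z *m v = 0 -> rho Z *m (rho H *m v - c *: v) = 0.
Proof.
move=> sH sZ HZ Zv; have := rho_comm v sH sZ.
rewrite Zv mulmx0 HZ linearZ /= -scalemxAl Zv scaler0 addr0 => /esym ZHv.
by rewrite mulmxBr ZHv -scalemxAr Zv scaler0 subrr.
Qed.

Definition primitive (v : 'cV[R]_4) :=
  [/\ rho E1 *m v = 0, rho E2 *m v = 0, rho Es *m v = 0 & rho Ed *m v = 0].

Definition weight (v : 'cV[R]_4) (p q : R) := rho H1 *m v = p *: v /\ rho H2 *m v = q *: v.

Let sl2_1 := rho_sl2 sp4_H1 sp4_E1 sp4_F1 (proj1 root_F1) br_E1_F1.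
Let sl2_2 := rho_sl2 sp4_H2 sp4_E2 sp4_F2 (proj2 root_F2) br_E2_F2.
Let sl2_d := rho_sl2 sp4_Hd sp4_Ed sp4_Fd br_Hd_Fd br_Ed_Fd.
Let sl2_s := rho_sl2 sp4_Hs sp4_Es sp4_Fs br_Hs_Fs br_Es_Fs.

Lemma primitive_nonzero_exists : exists2 w : 'cV[R]_4, w != 0 & primitive w.
Proof.
have two_neq0 : (2%:R : R) != 0 by rewrite pnatr_eq0.
have [k1 E1k] := rho_ad_nilpotent sp4_H1 sp4_E1 two_neq0 (proj1 root_E1).
have [k2 E2k] := rho_ad_nilpotent sp4_H2 sp4_E2 two_neq0 (proj2 root_E2).
have [ks Esk] := rho_ad_nilpotent sp4_H1 sp4_Es (oner_neq0 R) (proj1 root_Es).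
have [kd Edk] := rho_ad_nilpotent sp4_H1 sp4_Ed (oner_neq0 R) (proj1 root_Ed).
have w0_neq0 : (const_mx 1 : 'cV[R]_4) != 0.
  by apply/eqP => /matrixP /(_ o0 0) /eqP; rewrite !mxE oner_eq0.
have [w1 [_ w1_neq0 E1w1]] :=
  nilpotent_kernel_vector (P := fun _ => True) E1k (fun _ _ => I) I w0_neq0.
have E2_stable (v : 'cV[R]_4) : rho E1 *m v = 0 -> rho E1 *m (rho E2 *m v) = 0.
  by move=> E1v; apply: rho_kill_comm => //; rewrite br_E1_E2 linear0 mul0mx.
have [w2 [E1w2 w2_neq0 E2w2]] := nilpotent_kernel_vector E2k E2_stable E1w1 w1_neq0.
have Es_stable (v : 'cV[R]_4) : rho E1 *m v = 0 /\ rho E2 *m v = 0 ->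
    rho E1 *m (rho Es *m v) = 0 /\ rho E2 *m (rho Es *m v) = 0.
  move=> [E1v E2v]; split; apply: rho_kill_comm => //.
    by rewrite br_E1_Es linear0 mul0mx.
  by rewrite br_E2_Es linear0 mul0mx.
have [w3 [[E1w3 E2w3] w3_neq0 Esw3]] :=
  nilpotent_kernel_vector Esk Es_stable (conj E1w2 E2w2) w2_neq0.
have Ed_stable (v : 'cV[R]_4) : [/\ rho E1 *m v = 0, rho E2 *m v = 0 & rho Es *m v = 0] ->
    [/\ rho E1 *m (rho Ed *m v) = 0, rho E2 *m (rho Ed *m v) = 0
      & rho Es *m (rho Ed *m v) = 0].
  move=> [E1v E2v Esv]; split; apply: rho_kill_comm => //.
  - by rewrite br_E1_Ed linear0 mul0mx.
  - by rewrite br_E2_Ed linearN mulNmx Esv oppr0.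
  - by rewrite br_Es_Ed linearN linearZ /= mulNmx -scalemxAl E1v scaler0 oppr0.
have [w [[E1w E2w Esw] w_neq0 Edw]] :=
  nilpotent_kernel_vector Edk Ed_stable (And3 E1w3 E2w3 Esw3) w3_neq0.
by exists w.
Qed.

Lemma primitive_stable_H1 (v : 'cV[R]_4) c : primitive v -> primitive (rho H1 *m v - c *: v).
Proof.
move=> [E1v E2v Esv Edv]; split.
- exact: rho_kill_shift sp4_H1 sp4_E1 (proj1 root_E1) E1v.
- exact: rho_kill_shift sp4_H1 sp4_E2 (proj1 root_E2) E2v.
- exact: rho_kill_shift sp4_H1 sp4_Es (proj1 root_Es) Esv.
- exact: rho_kill_shift sp4_H1 sp4_Ed (proj1 root_Ed) Edv.
Qed.

Lemma primitive_stable_H2 (v : 'cV[R]_4) c : primitive v -> primitive (rho H2 *m v - c *: v).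
Proof.
move=> [E1v E2v Esv Edv]; split.
- exact: rho_kill_shift sp4_H2 sp4_E1 (proj2 root_E1) E1v.
- exact: rho_kill_shift sp4_H2 sp4_E2 (proj2 root_E2) E2v.
- exact: rho_kill_shift sp4_H2 sp4_Es (proj2 root_Es) Esv.
- exact: rho_kill_shift sp4_H2 sp4_Ed (proj2 root_Ed) Edv.
Qed.

Lemma primitive_vector_exists :
  exists v (a b : nat), [/\ v != 0, primitive v & weight v a%:R b%:R].
Proof.
have [w w_neq0 w_prim] := primitive_nonzero_exists.
have [w' [a [w'_prim w'_neq0 H1w']]] := sl2_eigenvector_nat sl2_1.1 sl2_1.2
  (@primitive_stable_H1) (fun v pv => let: And4 E1v _ _ _ := pv in E1v) w_prim w_neq0.
have H2_stable (v : 'cV[R]_4) c : primitive v /\ rho H1 *m v = a%:R *: v ->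
    primitive (rho H2 *m v - c *: v) /\
    rho H1 *m (rho H2 *m v - c *: v) = a%:R *: (rho H2 *m v - c *: v).
  move=> [v_prim H1v]; split; first exact: primitive_stable_H2.
  rewrite mulmxBr rho_comm // br_H1_H2 linear0 mul0mx addr0 H1v -!scalemxAr H1v.
  by rewrite scalerBr !scalerA mulrC.
have [v [b [[v_prim H1v] v_neq0 H2v]]] := sl2_eigenvector_nat sl2_2.1 sl2_2.2 H2_stable
  (fun v pv => let: And4 _ E2v _ _ := pv.1 in E2v) (conj w'_prim H1w') w'_neq0.
by exists v, a, b.
Qed.

Lemma weight_shift Z (p q a b : R) (v : 'cV[R]_4) : is_sp4 Z -> root_vector Z a b ->
  weight v p q -> weight (rho Z *m v) (p + a) (q + b).
Proof.
move=> sZ [H1Z H2Z] [H1v H2v]; split.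
  by rewrite rho_comm // H1v H1Z !linearZ /= -scalemxAl scalerDl.
by rewrite rho_comm // H2v H2Z !linearZ /= -scalemxAl scalerDl.
Qed.

(* Listed by decreasing [p + 5 q], the vectors [w k] have distinct eigenvalues for
   [rho H1 + 5 rho H2]; five of them cannot fit in dimension 4. *)
Lemma no_five_weight_vectors (w : nat -> 'cV[R]_4) (p q : nat -> R) :
  (forall k, (k <= 4)%N -> w k != 0 /\ weight (w k) (p k) (q k)) ->
  (forall k, (k < 4)%N -> p k.+1 + 5%:R * q k.+1 < p k + 5%:R * q k) -> False.
Proof.
move=> w_weight decr; pose l k := p k + 5%:R * q k.
have l_lt i j : (i < j <= 4)%N -> l j < l i.
  elim: j => // j IHj /andP[ij j4]; apply: lt_le_trans (decr j j4) _.
  move: ij; rewrite ltnS leq_eqVlt => /orP[/eqP-> // | ij].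
  by apply/ltW/IHj; rewrite ij ltnW.
have inj : injective (fun k : 'I_5 => l k).
  move=> i j lij; apply: val_inj; case: (ltngtP i j) => // lt.
    suff: l j < l i by rewrite lij ltxx.
    by apply: l_lt; rewrite lt -ltnS ltn_ord.
  suff: l i < l j by rewrite lij ltxx.
  by apply: l_lt; rewrite lt -ltnS ltn_ord.
suff eig (k : 'I_5) : eigenvalue (rho H1 + 5%:R *: rho H2)^T (l k).
  by have := card_eigenvalues_leq inj eig; rewrite card_ord.
have [w_neq0 [H1w H2w]] := w_weight k (ltn_ord k).
apply/eigenvalueP; exists (w k)^T; last by rewrite trmx_eq0.
by rewrite -trmx_mul mulmxDl -scalemxAl H1w H2w scalerA -scalerDl linearZ.
Qed.

Lemma rho_annihilator_eq0 (v : 'cV[R]_4) : rho Ed *m v = 0 -> rho Fd *m v = 0 ->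
  rho E2 *m v = 0 -> rho F2 *m v = 0 -> v = 0.
Proof.
move=> Edv Fdv E2v F2v; apply: Tmat_common_kernel_eq0 => i; rewrite -rho_phi.
apply: (sp4_generated (P := fun A => rho A *m v = 0)) => //.
  by move=> c A B Av Bv; rewrite linearD linearZ /= mulmxDl -scalemxAl Av Bv scaler0 addr0.
by move=> A B sA sB Av Bv; rewrite rho_br // /br mulmxBl -!mulmxA Av Bv !mulmx0 subrr.
Qed.

Section PrimitiveWeight.
Variables (v : 'cV[R]_4) (a b : nat).
Hypotheses (v_neq0 : v != 0) (v_prim : primitive v) (v_weight : weight v a%:R b%:R).

Let E1v : rho E1 *m v = 0. Proof. by case: v_prim. Qed.
Let E2v : rho E2 *m v = 0. Proof. by case: v_prim. Qed.
Let Esv : rho Es *m v = 0. Proof. by case: v_prim. Qed.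
Let Edv : rho Ed *m v = 0. Proof. by case: v_prim. Qed.
Let H1v : rho H1 *m v = a%:R *: v. Proof. by case: v_weight. Qed.
Let H2v : rho H2 *m v = b%:R *: v. Proof. by case: v_weight. Qed.

Let Hsv : rho Hs *m v = (a + b)%N%:R *: v.
Proof. by rewrite linearD mulmxDl H1v H2v natrD scalerDl. Qed.

Lemma primitive_weight_leq : (b <= a)%N.
Proof.
have Hdv : rho Hd *m v = (a%:R - b%:R) *: v by rewrite linearB mulmxBl H1v H2v scalerBl.
have [m [ab_m _ _]] := sl2_highest_weight sl2_d.1 sl2_d.2 Edv Hdv v_neq0.
by move/eqP: ab_m; rewrite subr_eq -natrD eqr_nat => /eqP ->; rewrite leq_addl.
Qed.

Let Hdv : rho Hd *m v = (a - b)%N%:R *: v.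
Proof. by rewrite linearB mulmxBl H1v H2v -scalerBl natrB // primitive_weight_leq. Qed.

Lemma primitive_weight_gt0 : (0 < a)%N.
Proof.
rewrite lt0n; apply/eqP => a0.
have b0 : b = 0%N by apply/eqP; rewrite -leqn0 -a0 primitive_weight_leq.
have Hdv0 := Hdv; have H2v0 := H2v; rewrite a0 b0 in Hdv0 H2v0.
case/eqP: v_neq0; apply: rho_annihilator_eq0 => //.
  by have := sl2_fpow_eq0 sl2_d.1 sl2_d.2 Edv Hdv0; rewrite expr1.
by have := sl2_fpow_eq0 sl2_2.1 sl2_2.2 E2v H2v0; rewrite expr1.
Qed.

Let F1v_neq0 : rho F1 *m v != 0.
Proof.
by have := sl2_fpow_neq0 sl2_1.1 sl2_1.2 E1v H1v v_neq0 primitive_weight_gt0; rewrite expr1.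
Qed.

Let Fsv_neq0 : rho Fs *m v != 0.
Proof.
have := sl2_fpow_neq0 sl2_s.1 sl2_s.2 Esv Hsv v_neq0 (j := 1).
by rewrite expr1 addn_gt0 primitive_weight_gt0; apply.
Qed.

Lemma primitive_weight_snd_eq0 : a = 1%N -> b = 0%N.
Proof.
move=> a1; have : (b <= 1)%N by rewrite -a1 primitive_weight_leq.
rewrite leq_eqVlt ltnS leqn0 => /orP[/eqP b1 | /eqP //]; exfalso.
have wv := v_weight; have H2v1 := H2v; rewrite a1 b1 in wv H2v1.
have wF1 := weight_shift sp4_F1 root_F1 wv.
have wFs := weight_shift sp4_Fs root_Fs wv.
have wF2 := weight_shift sp4_F2 root_F2 wv.
have wF2F1 := weight_shift sp4_F2 root_F2 wF1.
have E2F1v : rho E2 *m (rho F1 *m v) = 0.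
  by apply: rho_kill_comm => //; rewrite br_E2_F1 linear0 mul0mx.
have H2F1v : rho H2 *m (rho F1 *m v) = 1%:R *: (rho F1 *m v) by rewrite wF1.2 addr0.
have F2v_neq0 := sl2_fpow_neq0 sl2_2.1 sl2_2.2 E2v H2v1 v_neq0 (leqnn 1).
have F2F1v_neq0 := sl2_fpow_neq0 sl2_2.1 sl2_2.2 E2F1v H2F1v F1v_neq0 (leqnn 1).
rewrite expr1 in F2v_neq0 F2F1v_neq0.
apply: (@no_five_weight_vectors
  (nth 0 [:: v; rho F1 *m v; rho Fs *m v; rho F2 *m v; rho F2 *m (rho F1 *m v)])
  (nth 0 [:: 1%:R; 1%:R + - 2%:R; 1%:R + -1; 1%:R + 0; 1%:R + - 2%:R + 0])
  (nth 0 [:: 1%:R; 1%:R + 0; 1%:R + -1; 1%:R + - 2%:R; 1%:R + 0 + - 2%:R])).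
  by case=> [|[|[|[|[|k]]]]].
by case=> [|[|[|[|k]]]] //= _; lra.
Qed.

Lemma primitive_weight_lt2 : (a < 2)%N.
Proof.
rewrite ltnNge; apply/negP => a_ge2.
have F1F1v_neq0 := sl2_fpow_neq0 sl2_1.1 sl2_1.2 E1v H1v v_neq0 a_ge2.
rewrite mulmx_exprS expr1 in F1F1v_neq0.
have wF1 := weight_shift sp4_F1 root_F1 v_weight.
have wF1F1 := weight_shift sp4_F1 root_F1 wF1.
have wFs := weight_shift sp4_Fs root_Fs v_weight.
have [b_lt_a|b_ge_a] := ltnP b a.
  have Fdv_neq0 := sl2_fpow_neq0 sl2_d.1 sl2_d.2 Edv Hdv v_neq0 (j := 1).
  rewrite expr1 subn_gt0 b_lt_a in Fdv_neq0; have {}Fdv_neq0 := Fdv_neq0 isT.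
  have wFd := weight_shift sp4_Fd root_Fd v_weight.
  apply: (@no_five_weight_vectors
    (nth 0 [:: rho Fd *m v; v; rho F1 *m v; rho F1 *m (rho F1 *m v); rho Fs *m v])
    (nth 0 [:: a%:R + -1; a%:R; a%:R + - 2%:R; a%:R + - 2%:R + - 2%:R; a%:R + -1])
    (nth 0 [:: b%:R + 1; b%:R; b%:R + 0; b%:R + 0 + 0; b%:R + -1])).
    by case=> [|[|[|[|[|k]]]]].
  by case=> [|[|[|[|k]]]] //= _; lra.
have ba : b = a by apply/anti_leq; rewrite primitive_weight_leq b_ge_a.
have F2v_neq0 := sl2_fpow_neq0 sl2_2.1 sl2_2.2 E2v H2v v_neq0 (j := 1).
rewrite expr1 ba (ltnW a_ge2) in F2v_neq0; have {}F2v_neq0 := F2v_neq0 isT.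
have wF2 := weight_shift sp4_F2 root_F2 v_weight.
have wv := v_weight; rewrite ba in wv wF1 wFs wF1F1 wF2.
apply: (@no_five_weight_vectors
  (nth 0 [:: v; rho F1 *m v; rho F1 *m (rho F1 *m v); rho Fs *m v; rho F2 *m v])
  (nth 0 [:: a%:R; a%:R + - 2%:R; a%:R + - 2%:R + - 2%:R; a%:R + -1; a%:R + 0])
  (nth 0 [:: a%:R; a%:R + 0; a%:R + 0 + 0; a%:R + -1; a%:R + - 2%:R])).
  by case=> [|[|[|[|[|k]]]]].
by case=> [|[|[|[|k]]]] //= _; lra.
Qed.

End PrimitiveWeight.

Lemma primitive_weight_1_0 (v : 'cV[R]_4) (a b : nat) : v != 0 -> primitive v ->
  weight v a%:R b%:R -> a = 1%N /\ b = 0%N.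
Proof.
move=> v_neq0 v_prim v_weight.
have a1 : a = 1%N.
  by apply/anti_leq; rewrite -ltnS (primitive_weight_lt2 v_neq0 v_prim v_weight)
    (primitive_weight_gt0 v_neq0 v_prim v_weight).
by split; last exact: (primitive_weight_snd_eq0 v_neq0 v_prim v_weight).
Qed.

(* The columns mimic the standard basis of R^4: in the defining representation
   [e1 = Fd e0], [e2 = F1 e0] and [e3 = Fs e0]. *)
Definition standard_basis (v : 'cV[R]_4) : 'M[R]_4 :=
  colmx (fun j : 'I_4 => [:: v; rho Fd *m v; rho F1 *m v; rho Fs *m v]`_j).

Section StandardBasis.
Variable v0 : 'cV[R]_4.
Hypotheses (v0_prim : primitive v0) (v0_weight : weight v0 1%:R 0%:R).

Let v1 := rho Fd *m v0.
Let v2 := rho F1 *m v0.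
Let v3 := rho Fs *m v0.

Let E1v0 : rho E1 *m v0 = 0. Proof. by case: v0_prim. Qed.
Let E2v0 : rho E2 *m v0 = 0. Proof. by case: v0_prim. Qed.
Let Esv0 : rho Es *m v0 = 0. Proof. by case: v0_prim. Qed.
Let Edv0 : rho Ed *m v0 = 0. Proof. by case: v0_prim. Qed.

Let F2v0 : rho F2 *m v0 = 0.
Proof.
by have := sl2_fpow_eq0 sl2_2.1 sl2_2.2 E2v0 v0_weight.2; rewrite expr1.
Qed.

Let Fdv1 : rho Fd *m v1 = 0.
Proof.
have Hdv0 : rho Hd *m v0 = 1%:R *: v0.
  by rewrite linearB mulmxBl v0_weight.1 v0_weight.2 -scalerBl mulr0n subr0.
by have := sl2_fpow_eq0 sl2_d.1 sl2_d.2 Edv0 Hdv0; rewrite mulmx_exprS expr1.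
Qed.

Let F1v1 : rho F1 *m v1 = 0.
Proof.
have E1v1 : rho E1 *m v1 = 0.
  by apply: (rho_kill_comm sp4_E1 sp4_Fd E1v0); rewrite br_E1_Fd linearN mulNmx Esv0 oppr0.
have H1v1 : rho H1 *m v1 = 0%:R *: v1.
  by have [-> _] := weight_shift sp4_Fd root_Fd v0_weight; rewrite mulr1n addrN.
by have := sl2_fpow_eq0 sl2_1.1 sl2_1.2 E1v1 H1v1; rewrite expr1.
Qed.

Let F2v1 : rho F2 *m v1 = v3.
Proof. by rewrite rho_comm // F2v0 mulmx0 add0r br_F2_Fd. Qed.

Let Fsv1 : rho Fs *m v1 = v2.
Proof.
(* Compare the two expressions of [Fd v3] given by [v3 = F2 v1] and [v3 = Fs v0]. *)
have Fdv3 : rho Fd *m v3 = - (rho Fs *m v1).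
  by rewrite -F2v1 rho_comm // Fdv1 mulmx0 add0r br_Fd_F2 linearN mulNmx.
move: (rho_comm v0 sp4_Fd sp4_Fs); rewrite -/v1 -/v3 Fdv3 br_Fd_Fs linearN linearZ /=.
rewrite mulNmx -scalemxAl -/v2 => /matrixP Fdv3_entries.
by apply/matrixP => i j; move: (Fdv3_entries i j); rewrite !mxE; lra.
Qed.

Lemma Ed_action : [/\ rho Ed *m v0 = 0, rho Ed *m v1 = v0, rho Ed *m v2 = - v3 & rho Ed *m v3 = 0].
Proof.
split=> //.
- rewrite rho_comm // Edv0 mulmx0 add0r br_Ed_Fd linearB mulmxBl v0_weight.1 v0_weight.2.
  by rewrite -scalerBl mulr0n mulr1n subr0 scale1r.
- by rewrite rho_comm // Edv0 mulmx0 add0r br_Ed_F1 linearN mulNmx.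
- rewrite rho_comm // Edv0 mulmx0 add0r br_Ed_Fs linearN linearZ /= mulNmx -scalemxAl F2v0.
  by rewrite scaler0 oppr0.
Qed.

Lemma Fd_action : [/\ rho Fd *m v0 = v1, rho Fd *m v1 = 0, rho Fd *m v2 = 0 & rho Fd *m v3 = - v2].
Proof.
split=> //.
  by rewrite rho_comm // -/v1 F1v1 add0r br_Fd_F1 linear0 mul0mx.
by rewrite -F2v1 rho_comm // Fdv1 mulmx0 add0r br_Fd_F2 linearN mulNmx Fsv1.
Qed.

Lemma E2_action : [/\ rho E2 *m v0 = 0, rho E2 *m v1 = 0, rho E2 *m v2 = 0 & rho E2 *m v3 = v1].
Proof.
split=> //.
- by rewrite rho_comm // E2v0 mulmx0 add0r br_E2_Fd linear0 mul0mx.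
- by rewrite rho_comm // E2v0 mulmx0 add0r br_E2_F1 linear0 mul0mx.
- by rewrite rho_comm // E2v0 mulmx0 add0r br_E2_Fs.
Qed.

Lemma F2_action : [/\ rho F2 *m v0 = 0, rho F2 *m v1 = v3, rho F2 *m v2 = 0 & rho F2 *m v3 = 0].
Proof.
split=> //.
  by rewrite rho_comm // F2v0 mulmx0 add0r br_F2_F1 linear0 mul0mx.
by rewrite rho_comm // F2v0 mulmx0 add0r br_F2_Fs linear0 mul0mx.
Qed.

Lemma standard_basis_intertwines A : is_sp4 A ->
  rho A *m standard_basis v0 = standard_basis v0 *m A.
Proof.
move: A; apply: (sp4_generated (P := fun A => rho A *m standard_basis v0 = standard_basis v0 *m A)).
- move=> c A B AQ BQ.
  by rewrite linearD linearZ /= mulmxDl mulmxDr -scalemxAl -scalemxAr AQ BQ.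
- move=> A B sA sB AQ BQ; rewrite rho_br // /br mulmxBl mulmxBr -!mulmxA BQ AQ.
  by rewrite !mulmxA AQ BQ.
all: [> have [Zv0 Zv1 Zv2 Zv3] := Ed_action | have [Zv0 Zv1 Zv2 Zv3] := Fd_action
       | have [Zv0 Zv1 Zv2 Zv3] := E2_action | have [Zv0 Zv1 Zv2 Zv3] := F2_action ].
all: apply: mulmx_colmx; apply: ord4P; rewrite /= sum_ord4 /Ed /Fd /E2 /F2 !mxE /unit_z /=.
all: rewrite -/v1 -/v2 -/v3 ?Zv0 ?Zv1 ?Zv2 ?Zv3; apply/matrixP => i j; rewrite !mxE; ring.
Qed.

End StandardBasis.

Lemma Tmat_phi_equivalent : exists2 P : 'M[R]_4, P \in unitmx & forall i, T i *m P = P *m phi i.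
Proof.
have [v [a [b [v_neq0 v_prim v_weight]]]] := primitive_vector_exists.
have [a1 b0] := primitive_weight_1_0 v_neq0 v_prim v_weight; subst a b.
have TP i : T i *m standard_basis v = standard_basis v *m phi i.
  by rewrite -rho_phi; apply: standard_basis_intertwines.
exists (standard_basis v) => //; apply: Tmat_intertwiner_unit TP.
apply: contra v_neq0 => /eqP/matrixP P0; apply/eqP/matrixP => i j.
by have := P0 i o0; rewrite (ord1 j) !mxE.
Qed.

Lemma Tmat_normalizer (M : 'M[R]_4) (Mv : 'I_10 -> 'I_10 -> R) :
  (forall i, br M (T i) = \sum_k Mv k i *: T k) ->
  exists c (b : 'I_10 -> R),
    M = c%:M + \sum_k b k *: T k /\ forall k i, Mv k i = \sum_j b j * Tv k j i.
Proof.
move=> M_br; have [P P_unit TP] := Tmat_phi_equivalent.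
have conjT k : invmx P *m T k *m P = phi k by rewrite -mulmxA TP mulmxA mulVmx // mul1mx.
pose M' := invmx P *m M *m P.
have M'_br i : br M' (phi i) = \sum_k Mv k i *: phi k.
  have -> : br M' (phi i) = invmx P *m br M (T i) *m P.
    by rewrite /M' -conjT /br mulmxBr mulmxBl !mulmxA !mulmxK.
  rewrite M_br mulmx_sumr mulmx_suml; apply: eq_bigr => k _.
  by rewrite -scalemxAr -scalemxAl conjT.
have M'_normalizes A : is_sp4 A -> is_sp4 (br M' A).
  case/phi_span => c ->; have -> : br M' (\sum_i c i *: phi i) = \sum_i c i *: br M' (phi i).
    rewrite /br mulmx_sumr mulmx_suml -sumrB; apply: eq_bigr => i _.
    by rewrite -scalemxAl -scalemxAr scalerBr.
  by apply: is_sp4_sum => i; rewrite M'_br; apply: is_sp4_sum.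
have [c /phi_span [b M'cE]] := sp4_normalizer M'_normalizes.
have M'E : M' = c%:M + \sum_k b k *: phi k by rewrite -M'cE addrC subrK.
exists c, b; split.
  have -> : M = P *m M' *m invmx P by rewrite /M' !mulmxA mulmxV // mul1mx mulmxK.
  rewrite M'E mulmxDr mulmxDl mul_mx_scalar -scalemxAl mulmxV // scalemx1.
  rewrite mulmx_sumr mulmx_suml; congr (_ + _); apply: eq_bigr => k _.
  by rewrite -scalemxAr -scalemxAl -conjT !mulmxA mulmxV // mul1mx mulmxK.
move=> k i; apply/eqP; rewrite eq_sym -subr_eq0; apply/eqP; move: k; apply: phi_free.
under eq_bigr do rewrite scalerBl.
by rewrite sumrB -(br_comb_left _ _ phi_br) -(br_scalar_mxDl c) -M'E M'_br subrr.
Qed.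

Lemma Tmat_inner_derivation (c : R) (b : 'I_10 -> R) i :
  br (c%:M + \sum_k b k *: T k) (T i) = \sum_k (\sum_j b j * Tv k j i) *: T k.
Proof. by rewrite br_scalar_mxDl (br_comb_left _ _ Tmat_br). Qed.

End Transport.

Theorem mainTheorem13 (R : realType)
    (Tv : 'I_10 -> 'I_10 -> 'I_10 -> R) (Ts : 'I_4 -> 'I_10 -> 'I_4 -> R)
    (Hiso : iso_to_sp4 Tv) (Hrep : is_rep Tv Ts) (Hirr : irreducible_rep Ts)
    (Ms : 'I_4 -> 'I_4 -> R) (Mv : 'I_10 -> 'I_10 -> R) :
  (forall a i b, Mderiv_T Ts Ms Mv a i b = 0) <->
  (exists (c : R) (bv : 'I_10 -> R),
      (forall a b, Ms a b = c * (a == b)%:R + \sum_k bv k * Ts a k b) /\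
      (forall i j, Mv i j = \sum_k bv k * Tv i k j)).
Proof.
have [phi [phi_sp4 phi_free phi_span phi_br]] := Hiso.
pose M : 'M[R]_4 := \matrix_(a, b) Ms a b.
have MderE a i b :
    Mderiv_T Ts Ms Mv a i b = (br M (Tmat Ts i) - \sum_k Mv k i *: Tmat Ts k) a b.
  by rewrite /Mderiv_T !mxE summxE; congr (_ - _ - _); apply: eq_bigr => l _; rewrite !mxE.
have entry c bv a b :
    (c%:M + \sum_k bv k *: Tmat Ts k) a b = c * (a == b)%:R + \sum_k bv k * Ts a k b.
  by rewrite !mxE summxE mulr_natr; congr (_ + _); apply: eq_bigr => k _; rewrite !mxE.
have MsE c bv : M = c%:M + \sum_k bv k *: Tmat Ts k <->
    forall a b, Ms a b = c * (a == b)%:R + \sum_k bv k * Ts a k b.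
  by rewrite -matrixP; split=> E a b; move: (E a b); rewrite entry mxE.
split=> [M_der | [c [bv [/MsE M_E Mv_E]]] a i b].
  have M_br i : br M (Tmat Ts i) = \sum_k Mv k i *: Tmat Ts k.
    by apply/eqP; rewrite -subr_eq0; apply/eqP/matrixP => a b; rewrite -MderE M_der mxE.
  have [c [bv [/MsE M_E Mv_E]]] := Tmat_normalizer phi_sp4 phi_free phi_span phi_br Hrep Hirr M_br.
  by exists c, bv.
rewrite MderE M_E (Tmat_inner_derivation Hrep).
have -> : \sum_k Mv k i *: Tmat Ts k = \sum_k (\sum_j bv j * Tv k j i) *: Tmat Ts k.
  by apply: eq_bigr => k _; rewrite Mv_E.
by rewrite subrr mxE.
Qed.
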